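(* Let $A$ and $B$ be two $n\times n$ generalized tournament matrices with the same principal minors of orders at most $4$, and let $\alpha>1/2$. Then $A$ is $\alpha$-separable if and only if $B$ is $\alpha$-separable.
   Context: A generalized tournament matrix of order $n$ is a real $n\times n$ matrix $M=(m_{ij})$ with nonnegative entries satisfying $M+M^{t}=J_n-I_n$. Write $[n]=\{1,\ldots,n\}$. For $\alpha>1/2$, $M$ is $\alpha$-separable if there is a partition of $[n]$ into two nonempty sets $X,Y$ such that $m_{xy}=\alpha$ for all $x\in X$, $y\in Y$. *)

From HB Require Import structures.
From mathcomp Require Import all_boot all_order all_algebra.
Set Implicit Arguments. Unset Strict Implicit. Unset Printing Implicit Defensive.
Import Order.TTheory GRing.Theory Num.Theory.
Local Open Scope ring_scope.

Definition gen_tournament (R : realFieldType) (n : nat) (M : 'M[R]_n) : Prop :=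
  (forall i j, 0 <= M i j) /\
  (forall i j, M i j + M j i = if i == j then 0 else 1).

Definition principal_submx (R : realFieldType) (n : nat) (M : 'M[R]_n)
  (S : {set 'I_n}) : 'M[R]_#|S| :=
  \matrix_(i < #|S|, j < #|S|) M (enum_val i) (enum_val j).

Definition principal_minor (R : realFieldType) (n : nat) (M : 'M[R]_n)
  (S : {set 'I_n}) : R := \det (principal_submx M S).

Definition separable (R : realFieldType) (n : nat) (alpha : R) (M : 'M[R]_n)
  : Prop :=
  exists X : {set 'I_n}, X != set0 /\ ~: X != set0 /\
    (forall x y, x \in X -> y \in ~: X -> M x y = alpha).

(* Equal 2x2 principal minors force B_ij to be A_ij or 1 - A_ij, so every
   entry alpha of A across a cut reappears in B in one of the two directions.
   Equal 3x3 minors make this orientation transitive through any vertex whose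
   two partners lie on the other side of the cut.  Such an orientation has no
   alternating 4-cycle, hence a vertex dominating the opposite side; the
   vertices of its side that also dominate the opposite side form an
   alpha-cut of B. *)

From HB Require Import structures.
From mathcomp Require Import all_boot all_order all_algebra.
From mathcomp Require Import ring lra.
Import Order.TTheory GRing.Theory Num.Theory.
Local Open Scope ring_scope.

Set Implicit Arguments.
Unset Strict Implicit.

Lemma det_mx2 (R : comNzRingType) (M : 'M[R]_2) :
  \det M = M 0 0 * M 1 1 - M 0 1 * M 1 0.
Proof.
have -> : M = \matrix_(a, b) M (inord a) (inord b).
  by apply/matrixP=> a b; rewrite mxE !inord_val.
rewrite (expand_det_row _ 0) !big_ord_recl big_ord0 /cofactor !det_mx11 !mxE /=.
ring.
Qed.

Lemma det_mx3 (R : comNzRingType) (M : 'M[R]_3) : \det M =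
  M 0 0 * M 1 1 * M 2 2 - M 0 0 * M 1 2 * M 2 1 - M 0 1 * M 1 0 * M 2 2
  + M 0 1 * M 1 2 * M 2 0 + M 0 2 * M 1 0 * M 2 1 - M 0 2 * M 1 1 * M 2 0.
Proof.
have -> : M = \matrix_(a, b) M (inord a) (inord b).
  by apply/matrixP=> a b; rewrite mxE !inord_val.
rewrite (expand_det_row _ 0) !big_ord_recl big_ord0 /cofactor.
rewrite !(expand_det_row _ 0) !big_ord_recl !big_ord0 /cofactor !det_mx11 !mxE /=.
ring.
Qed.

Lemma card_set3 (T : finType) (i j k : T) :
  i != j -> j != k -> i != k -> #|[set i; j; k]| = 3%N.
Proof.
move=> ij jk ik; rewrite -setUA cardsU1 cards2 jk !inE.
by rewrite negb_or ij ik.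
Qed.

Section ZeroDiagonalMinors.

Variables (R : realFieldType) (n : nat) (M : 'M[R]_n).
Hypothesis diagM : forall l, M l l = 0.

(* The minors below are symmetric in the listed vertices, so the order in
   which [enum_val] lists S is irrelevant: we generalize over any injective
   listing of S. *)
Lemma principal_minor2 i j : i != j ->
  principal_minor M [set i; j] = - (M i j * M j i).
Proof.
move=> ij; rewrite /principal_minor /principal_submx.
have card2 : #|[set i; j]| = 2%N by rewrite cards2 ij.
move: (@enum_val_inj _ (mem [set i; j])) (@enum_valP _ (mem [set i; j])).
move: (@enum_val _ (mem [set i; j])); rewrite card2 => g g_inj g_in.
rewrite det_mx2 !mxE !diagM.
have : g 0 != g 1 by rewrite (inj_eq g_inj).
move: (g_in 0) (g_in 1); rewrite !inE.
by do 2!case/orP=> /eqP->; rewrite ?eqxx // => _; ring.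
Qed.

Lemma principal_minor3 i j k : i != j -> j != k -> i != k ->
  principal_minor M [set i; j; k] = M i j * M j k * M k i + M i k * M k j * M j i.
Proof.
move=> ij jk ik; rewrite /principal_minor /principal_submx.
move: (@enum_val_inj _ (mem [set i; j; k])) (@enum_valP _ (mem [set i; j; k])).
move: (@enum_val _ (mem [set i; j; k])); rewrite card_set3 // => g g_inj g_in.
rewrite det_mx3 !mxE !diagM.
have g01 : g 0 != g 1 by rewrite (inj_eq g_inj).
have g02 : g 0 != g 2 by rewrite (inj_eq g_inj).
have g12 : g 1 != g 2 by rewrite (inj_eq g_inj).
move: (g_in 0) (g_in 1) (g_in 2) g01 g02 g12; rewrite !inE.
by do 3!case/orP=> [/orP[]|] /eqP->; rewrite ?eqxx // => _ _ _; ring.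
Qed.

End ZeroDiagonalMinors.

Section GenTournament.

Variables (R : realFieldType) (n : nat) (M : 'M[R]_n).
Hypothesis tM : gen_tournament M.

Lemma gen_tournament_diag l : M l l = 0.
Proof.
by case: tM => M_ge0 M_sum; have := M_sum l l; rewrite eqxx; have := M_ge0 l l; lra.
Qed.

Lemma gen_tournament_opp i j : i != j -> M j i = 1 - M i j.
Proof. by case: tM => _ M_sum ij; have := M_sum i j; rewrite (negbTE ij); lra. Qed.

Lemma gen_tournament_minor2 i j : i != j ->
  principal_minor M [set i; j] = - (M i j * (1 - M i j)).
Proof.
move=> ij; rewrite principal_minor2 ?(gen_tournament_opp ij) //.
exact: gen_tournament_diag.
Qed.

Lemma gen_tournament_minor3 i j k : i != j -> j != k -> i != k ->
  principal_minor M [set i; j; k] =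
  M i j * M j k * (1 - M i k) + M i k * (1 - M j k) * (1 - M i j).
Proof.
move=> ij jk ik; rewrite principal_minor3 //; last exact: gen_tournament_diag.
by rewrite (gen_tournament_opp ik) (gen_tournament_opp jk) (gen_tournament_opp ij).
Qed.

End GenTournament.

Section OrientationAcrossCut.

Variables (T : finType) (X : {set T}) (e : rel T).

Definition across u v := (u \in X) != (v \in X).

Lemma across_sym u v : across u v = across v u.
Proof. by rewrite /across eq_sym. Qed.

Lemma across_neq u v : across u v -> u != v.
Proof. by apply: contraTneq => ->; rewrite /across eqxx. Qed.

Lemma across_same_side u v w : ~~ across u v -> across u w = across v w.
Proof. by rewrite /across negbK => /eqP->. Qed.

Lemma across_twice u v w : across u v -> across v w -> ~~ across u w.
Proof. by rewrite /across; case: (u \in X); case: (v \in X); case: (w \in X). Qed.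

Hypotheses (e_asym : forall u v, e u v -> ~~ e v u)
  (e_total : forall u v, across u v -> e u v || e v u)
  (e_trans : forall z u v, across z u -> across z v -> e u z -> e z v -> e u v).

Definition dominant z := [forall w, across z w ==> e z w].

Lemma e_total_not u v : across u v -> ~~ e u v -> e v u.
Proof. by move/e_total; case: (e u v). Qed.

(* A vertex of X of maximal out-degree across the cut either dominates, or is
   beaten by some y0 which then dominates: otherwise four vertices would carry
   an oriented 4-cycle across the cut, contradicting [e_trans]. *)
Lemma exists_dominant : X != set0 -> exists z, dominant z.
Proof.
case/set0Pn=> x0 x0X.
pose N x := [set w | across x w && e x w].
case: (@arg_maxnP _ x0 (mem X) (fun x => #|N x|) x0X) => xm xmX xm_max.
have {}xmX : xm \in X by [].
have {}xm_max x : x \in X -> (#|N x| <= #|N xm|)%N by apply: xm_max.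
have [|/forallPn[y0]] := boolP (dominant xm); first by exists xm.
rewrite negb_imply => /andP[xm_y0 not_e_xm_y0].
have e_y0_xm : e y0 xm by apply: e_total_not.
exists y0; apply/forallP=> x; apply/implyP=> y0_x; apply/negPn/negP=> not_e_y0_x.
have e_x_y0 : e x y0 by apply: e_total_not; rewrite // across_sym.
have same_xm_x : ~~ across xm x := across_twice xm_y0 y0_x.
have xX : x \in X by move: same_xm_x; rewrite /across xmX negbK eq_sym => /eqP.
have y0_Nx : y0 \in N x by rewrite inE across_sym y0_x e_x_y0.
have y0_Nxm : y0 \notin N xm by rewrite inE negb_and not_e_xm_y0 orbT.
have : ~~ (N xm \subset N x).
  apply/negP=> sub; have : N xm \proper N x by apply/properP; split=> //; exists y0.
  by move/proper_card; rewrite ltnNge xm_max.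
case/subsetPn=> y1; rewrite !inE (across_same_side _ same_xm_x).
move=> /andP[x_y1 e_xm_y1]; rewrite x_y1 /= => not_e_x_y1.
have e_y1_y0 : e y1 y0.
  by apply: (e_trans x_y1) => //; [rewrite across_sym | exact: e_total_not].
have e_y0_y1 : e y0 y1.
  by apply: (e_trans xm_y0) => //; rewrite (across_same_side _ same_xm_x).
by move/e_asym: e_y1_y0; rewrite e_y0_y1.
Qed.

Lemma cut_of_dominant z : dominant z -> (exists w, across z w) ->
  exists S : {set T}, S != set0 /\ ~: S != set0 /\
    (forall u v, u \in S -> v \in ~: S -> e u v).
Proof.
move=> dom_z [w zw].
exists [set u | ~~ across z u & dominant u]; split; last split.
- by apply/set0Pn; exists z; rewrite inE /across eqxx.
- by apply/set0Pn; exists w; rewrite !inE zw.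
move=> u v; rewrite !inE => /andP[zu /forallP dom_u] v_notin.
have [zv | zv] := boolP (across z v).
  by apply: (implyP (dom_u v)); rewrite -(across_same_side _ zu).
move: v_notin; rewrite zv /= => /forallPn[w'].
rewrite negb_imply => /andP[vw' not_e_v_w'].
have uv : ~~ across u v by rewrite -(across_same_side _ zu).
have uw' : across u w' by rewrite (across_same_side _ uv).
apply: (e_trans (z := w')); rewrite 1?across_sym //.
- exact: (implyP (dom_u w')).
- exact: e_total_not.
Qed.

Lemma cut_orientation : X != set0 -> ~: X != set0 ->
  exists S : {set T}, S != set0 /\ ~: S != set0 /\
    (forall u v, u \in S -> v \in ~: S -> e u v).
Proof.
move=> X0 Xc0; have [z dom_z] := exists_dominant X0.
apply: (cut_of_dominant dom_z).
have [zX | zXc] := boolP (z \in X).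
- case/set0Pn: Xc0 => w; rewrite inE => wXc.
  by exists w; rewrite /across zX (negbTE wXc).
- by case/set0Pn: X0 => w wX; exists w; rewrite /across wX (negbTE zXc).
Qed.

End OrientationAcrossCut.

Section MinorTransfer.

Variables (R : realFieldType) (n : nat) (A B : 'M[R]_n).
Hypotheses (tA : gen_tournament A) (tB : gen_tournament B)
  (minorsAB : forall S : {set 'I_n},
     (#|S| <= 3)%N -> principal_minor A S = principal_minor B S).

Lemma minor2_eq i j : i != j -> A i j * (1 - A i j) = B i j * (1 - B i j).
Proof.
move=> ij; have := minorsAB (S := [set i; j]); rewrite cards2 ij => /(_ isT).
by rewrite !gen_tournament_minor2 // => /oppr_inj.
Qed.

Lemma entry_pair_eq i j : i != j -> B i j = A i j \/ B j i = A i j.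
Proof.
move=> ij; have : (B i j - A i j) * (B i j - (1 - A i j)) = 0.
  by rewrite -[RHS](subrr (A i j * (1 - A i j))) {2}(minor2_eq ij); ring.
move/eqP; rewrite mulf_eq0 !subr_eq0 => /orP[/eqP-> | /eqP Bij]; first by left.
by right; rewrite (gen_tournament_opp tB ij) Bij; ring.
Qed.

(* The 3-minor equation on {i, j, k} reduces to (B j k - a) * (1 - 2 a) = 0. *)
Lemma entry_path_eq a i j k : i != j -> j != k -> i != k -> 2 * a != 1 ->
  A i j = A i k -> B j i = a -> B i k = a -> B j k = a.
Proof.
move=> ij jk ik a_neq Aijk Bji Bik.
have := minorsAB (S := [set i; j; k]); rewrite card_set3 // => /(_ isT).
rewrite !gen_tournament_minor3 // -Aijk.
have -> : A i j * A j k * (1 - A i j) + A i j * (1 - A j k) * (1 - A i j) =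
          A i j * (1 - A i j) by ring.
rewrite minor2_eq // (gen_tournament_opp tB (j := i)) 1?eq_sym // Bji Bik => e3.
have : (B j k - a) * (1 - 2 * a) = 0.
  by rewrite -[RHS](subrr ((1 - a) * (1 - (1 - a)))) {1}e3; ring.
move/eqP; rewrite mulf_eq0 subr_eq0 => /orP[/eqP // | ].
by rewrite subr_eq0 eq_sym (negbTE a_neq).
Qed.

Variable alpha : R.
Hypothesis alpha_gt_half : 1 / 2 < alpha.

Lemma separation_entry (X : {set 'I_n}) :
  (forall x y, x \in X -> y \in ~: X -> A x y = alpha) ->
  forall u v, across X u v -> A u v = if u \in X then alpha else 1 - alpha.
Proof.
move=> sepA u v uv; have vu : v != u by rewrite eq_sym (across_neq uv).
case: ifP uv => uX; rewrite /across uX => vX.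
- by apply: sepA; rewrite // inE; case: (v \in X) vX.
- rewrite (gen_tournament_opp tA vu) sepA ?inE ?uX //.
  by case: (v \in X) vX.
Qed.

Lemma separable_transfer : separable alpha A -> separable alpha B.
Proof.
case=> X [X0 [Xc0 sepA]].
have alpha_neq : 2 * alpha != 1 by rewrite gt_eqF //; move: alpha_gt_half; lra.
pose e := [rel u v | B u v == alpha].
have e_asym u v : e u v -> ~~ e v u.
  move=> /eqP Buv; apply/eqP=> Bvu; have [uv | uv] := eqVneq u v.
    by move: Buv alpha_gt_half; rewrite uv gen_tournament_diag //; lra.
  by move: Bvu alpha_gt_half; rewrite (gen_tournament_opp tB uv) Buv; lra.
have pair_alpha i j : i != j -> A i j = alpha -> e i j || e j i.
  by move=> ij Aij; case: (entry_pair_eq ij) => /= ->; rewrite Aij eqxx ?orbT.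
have e_total u v : across X u v -> e u v || e v u.
  move=> uv; have vu : across X v u by rewrite across_sym.
  have [uX | uXc] := boolP (u \in X).
    by apply: pair_alpha (across_neq uv) _; rewrite (separation_entry sepA uv) uX.
  have vX : v \in X by move: uv; rewrite /across (negbTE uXc); case: (v \in X).
  rewrite orbC; apply: pair_alpha (across_neq vu) _.
  by rewrite (separation_entry sepA vu) vX.
have e_trans z u v : across X z u -> across X z v -> e u z -> e z v -> e u v.
  move=> zu zv /eqP Buz /eqP Bzv; apply/eqP.
  have [uv | uv] := eqVneq u v.
    by have := e_asym u z; rewrite /= Buz uv Bzv eqxx => /(_ isT).
  apply: (entry_path_eq (across_neq zu) uv (across_neq zv) alpha_neq _ Buz Bzv).
  by rewrite (separation_entry sepA zu) (separation_entry sepA zv).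
have [S [S0 [Sc0 e_cut]]] := cut_orientation e_asym e_total e_trans X0 Xc0.
by exists S; do 2!split=> //; move=> u v uS vSc; apply/eqP; apply: e_cut.
Qed.

End MinorTransfer.

Theorem corollary5p6 (R : realFieldType) (n : nat) (A B : 'M[R]_n) (alpha : R) :
  gen_tournament A -> gen_tournament B ->
  (forall S : {set 'I_n}, (#|S| <= 4)%N -> principal_minor A S = principal_minor B S) ->
  1 / 2 < alpha ->
  (separable alpha A <-> separable alpha B).
Proof.
move=> tA tB minorsAB alpha_gt_half.
by split; apply: separable_transfer => // S /leqW /minorsAB ->.
Qed.
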